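(* Let $n\ge 1$, $c\ge 0$ and $0\le k\le c$ be integers. There is a norm-preserving bijection between Gelfand–Tsetlin patterns with $n$ rows, parts in $\{0,1,\ldots,c\}$ and $a_{n,n}=k$, and strict plane partitions with parts in $\{1,2,\ldots,n\}$, at most $c$ columns and exactly $k$ parts equal to $n$. Under this bijection $(a_{1,n},a_{1,n-1},\ldots,a_{1,1})$ is the shape of the corresponding strict plane partition.
   Context: A Gelfand–Tsetlin pattern with $n$ rows and parts in $\{0,\ldots,c\}$ is an array of integers $(a_{i,j})_{1\le i\le n,\ i\le j\le n}$ with $0\le a_{i,j}\le c$ such that, setting $a_{i,i-1}=0$ and $a_{i,n+1}=c$, one has $a_{i,j}\le a_{i-1,j}\le a_{i,j+1}$ for all $2\le i\le n$ and $i-1\le j\le n$ (row $n$ consists of the single entry $a_{n,n}$ and is drawn on top; row $1$ has $n$ entries). Its norm is $\sum_{1\le i\le j\le n}a_{i,j}$. A strict plane partition of shape $\lambda=(\lambda_1\ge\lambda_2\ge\cdots\ge 0)$ is an array of non-negative integers $(\pi_{i,j})_{1\le j\le\lambda_i}$ with weakly decreasing rows and strictly decreasing columns; its norm is the sum of its entries; ''at most $c$ columns'' means $\lambda_1\le c$. *)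

From mathcomp Require Import all_boot.
Set Implicit Arguments. Unset Strict Implicit. Unset Printing Implicit Defensive.

(** A pattern with n rows is stored as a list [A] of n rows, where
    [nth [::] A (i-1)] is row i (1 <= i <= n), listing
    a_{i,i}, a_{i,i+1}, ..., a_{i,n}  (so it has n-i+1 entries). *)

(* a_{i,j} with 1-based indices, including the boundary conventions
   a_{i,i-1} = 0 and a_{i,n+1} = c. *)
Definition gt_entry (n c : nat) (A : seq (seq nat)) (i j : nat) : nat :=
  if j == i.-1 then 0
  else if j == n.+1 then c
  else nth 0 (nth [::] A i.-1) (j - i).

Definition is_GT (n c : nat) (A : seq (seq nat)) : bool :=
  [&& size A == n,
      all (fun i => size (nth [::] A i.-1) == n - i + 1) (iota 1 n),
      all (fun i => all (fun j => gt_entry n c A i j <= c) (iota i (n - i + 1)))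
          (iota 1 n)
    & all (fun i => all (fun j =>
              (gt_entry n c A i j <= gt_entry n c A i.-1 j) &&
              (gt_entry n c A i.-1 j <= gt_entry n c A i j.+1))
            (iota i.-1 (n - i + 2)))
          (iota 2 n.-1)].

Definition gt_norm (A : seq (seq nat)) : nat := sumn (map sumn A).

(** Stored as the list of rows (row 1 first);
    a row of length 0 is not stored, so all stored rows are nonempty and
    the shape is lambda_i = size of row i (0 beyond the last row). *)

Definition spp_row (P : seq (seq nat)) (i : nat) : seq nat := nth [::] P i.-1.

Definition spp_shape (P : seq (seq nat)) (i : nat) : nat := size (spp_row P i).

Definition is_SPP (P : seq (seq nat)) : bool :=
  [&& all (fun r => 0 < size r) P,
      sorted geq (map size P),
      all (fun r => sorted geq r) P
    &
      all (fun i => all (fun j => nth 0 (nth [::] P i.+1) j < nth 0 (nth [::] P i) j)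
                        (iota 0 (size (nth [::] P i.+1))))
          (iota 0 (size P).-1)].

Definition spp_norm (P : seq (seq nat)) : nat := sumn (map sumn P).

Definition spp_class (n c k : nat) (P : seq (seq nat)) : bool :=
  [&& is_SPP P,
      all (fun x => (1 <= x <= n)) (flatten P),
      all (fun r => size r <= c) P
    & count (fun x => x == n) (flatten P) == k].

Definition gt_class (n c k : nat) (A : seq (seq nat)) : bool :=
  is_GT n c A && (gt_entry n c A n n == k).

(* Read a Gelfand-Tsetlin pattern by columns: column j is the partition
   a_{1,j} >= ... >= a_{j,j}, and row n+1-j of the strict plane partition is its
   conjugate, which has a_{1,j} parts, all in {1, ..., j}.  Conjugation is an
   involution and preserves sums; the interlacing a_{i,j} <= a_{i+1,j+1} of the
   pattern is exactly the strict decrease of the columns of the plane partition;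
   and the parts equal to n all lie in the top row, the conjugate of column n,
   where they number a_{n,n}. *)

From mathcomp Require Import all_boot zify.
Set Implicit Arguments. Unset Strict Implicit. Unset Printing Implicit Defensive.

Lemma sorted_geq_mkseq (f : nat -> nat) m :
  (forall i, i.+1 < m -> f i.+1 <= f i) -> sorted geq (mkseq f m).
Proof.
move=> f_dec; apply/(sortedP 0) => i; rewrite size_mkseq => lt_i1m.
by rewrite !nth_mkseq //; [apply: f_dec | lia].
Qed.

Lemma eq_in_mkseq (T : Type) (f g : nat -> T) m :
  (forall i, i < m -> f i = g i) -> mkseq f m = mkseq g m.
Proof. by move=> fg; apply/eq_in_map => i; rewrite mem_iota => /andP[_]; apply: fg. Qed.

Lemma sumn_mkseq f m : sumn (mkseq f m) = \sum_(0 <= i < m) f i.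
Proof. by rewrite sumnE big_map /index_iota subn0. Qed.

Lemma exchange_big_triangle n (F : nat -> nat -> nat) :
  \sum_(0 <= i < n) \sum_(i <= j < n) F i j = \sum_(0 <= j < n) \sum_(0 <= i < j.+1) F i j.
Proof.
under eq_bigr => i _ do rewrite (@big_nat_widenl _ _ _ i 0) //.
rewrite (exchange_big_dep_nat predT) //=; apply: eq_big_nat => j /andP[_ lt_jn].
by rewrite (big_nat_widen _ _ _ _ _ lt_jn).
Qed.

Lemma sum_triangle n (F : nat -> nat -> nat) :
  \sum_(0 <= i < n) \sum_(0 <= d < n - i) F i (i + d) =
  \sum_(0 <= r < n) \sum_(0 <= i < n - r) F i (n - r.+1).
Proof.
rewrite [RHS](big_nat_rev _ _ 0) add0n.
rewrite [RHS](eq_big_nat _ _ (F2 := fun j => \sum_(0 <= i < j.+1) F i j)); last first.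
  move=> r /andP[_ lt_rn]; have -> : n - (n - r.+1) = r.+1 by lia.
  by apply: eq_bigr => i _; congr F; lia.
rewrite -exchange_big_triangle; apply: eq_bigr => i _.
by rewrite (big_addn 0 n i); apply: eq_bigr => d _; rewrite addnC.
Qed.

Lemma count_ltn_iota0 a m : a <= m -> count (fun i => i < a) (iota 0 m) = a.
Proof. by move=> le_am; rewrite -size_filter (filter_iota_ltn 0) ?size_iota. Qed.

Lemma sorted_geq_head x s : sorted geq (x :: s) -> all (geq x) s.
Proof. by apply: order_path_min => a b d /= ? ?; lia. Qed.

Lemma count_ltn_sorted s i q : sorted geq s ->
  (q < count (ltn i) s) = (i < nth 0 s q).
Proof.
elim: s q => [|x s IHs] q /=; first by rewrite nth_nil.
move=> sorted_xs; have /IHs IH := path_sorted sorted_xs.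
case: (ltnP i x) => [lt_ix | le_xi].
  by case: q => [|q] //=; rewrite add1n ltnS IH.
have /allP le_sx := sorted_geq_head sorted_xs.
have -> : count (ltn i) s = 0.
  by apply/eqP; rewrite -leqn0 leqNgt -has_count; apply/hasPn => y /le_sx /=; lia.
case: q => [|q] /=; first lia.
case: (ltnP q (size s)) => [lt_qs | le_sq]; last by rewrite nth_default.
by have := le_sx _ (mem_nth 0 lt_qs); rewrite /=; lia.
Qed.

(* Conjugation swaps the two shifts of a domination [t_q + e <= s_(q+d)]: with
   [(d, e) = (1, 0)] this is interlacing, with [(0, 1)] strict decrease. *)
Lemma count_ltn_shift d e s t i : sorted geq s -> sorted geq t ->
  (forall q, q < size t -> nth 0 t q + e <= nth 0 s (q + d)) ->
  0 < count (ltn i) t -> count (ltn i) t + d <= count (ltn (i + e)) s.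
Proof.
move=> sorted_s sorted_t le_ts; set k := count (ltn i) t => k_gt0.
have lt_k1_size : k.-1 < size t by apply: leq_trans (count_size (ltn i) t); lia.
have : k.-1 < k by lia.
rewrite {2}/k count_ltn_sorted // => lt_i_t.
have : k.-1 + d < count (ltn (i + e)) s.
  by rewrite count_ltn_sorted //; have := le_ts _ lt_k1_size; lia.
lia.
Qed.

(** * Conjugate partitions *)

Definition conjugate (m : nat) (s : seq nat) : seq nat :=
  mkseq (fun i => count (ltn i) s) m.

Lemma size_conjugate m s : size (conjugate m s) = m.
Proof. exact: size_mkseq. Qed.

Lemma nth_conjugate m s i : i < m -> nth 0 (conjugate m s) i = count (ltn i) s.
Proof. exact: nth_mkseq. Qed.

Section Conjugate.

Variables (m : nat) (s : seq nat).

Lemma sorted_conjugate : sorted geq (conjugate m s).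
Proof. by apply: sorted_geq_mkseq => i _; apply: sub_count => x /=; lia. Qed.

Lemma conjugate_bounded : all (fun x => x <= size s) (conjugate m s).
Proof. by apply/allP => _ /mapP[i _ ->]; apply: count_size. Qed.

Lemma head_conjugate : 0 < m -> head 0 (conjugate m s) = count (ltn 0) s.
Proof. by move=> m_gt0; rewrite -nth0 nth_conjugate. Qed.

Hypothesis sorted_s : sorted geq s.

Lemma conjugate_gt0 : m <= head 0 s -> all (fun x => 0 < x) (conjugate m s).
Proof.
move=> le_m_head; apply/allP => x /mapP[i]; rewrite mem_iota => /andP[_ lt_im] ->.
by rewrite (count_ltn_sorted i 0 sorted_s) nth0; lia.
Qed.

Lemma conjugateK : all (fun x => x <= m) s -> conjugate (size s) (conjugate m s) = s.
Proof.
move=> /allP le_sm; apply: (@eq_from_nth _ 0); rewrite !size_conjugate // => q lt_qs.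
rewrite nth_conjugate // /conjugate /mkseq count_map.
rewrite (@eq_count _ _ (fun i => i < nth 0 s q)); last first.
  by move=> i /=; rewrite count_ltn_sorted.
by rewrite count_ltn_iota0 // le_sm // mem_nth.
Qed.

End Conjugate.

Lemma sumn_conjugate m s : all (fun x => x <= m) s -> sumn (conjugate m s) = sumn s.
Proof.
move=> /allP le_sm; rewrite !sumnE /conjugate /mkseq big_map.
under eq_bigr => i _ do rewrite -sum1_count big_mkcond.
rewrite exchange_big; apply: eq_big_seq => x x_s.
by rewrite -big_mkcond sum1_count count_ltn_iota0 ?le_sm.
Qed.

Definition conj_part (s : seq nat) : seq nat := conjugate (head 0 s) s.

Lemma size_conj_part s : size (conj_part s) = head 0 s.
Proof. exact: size_conjugate. Qed.

Lemma nth_conj_part s q : q < head 0 s -> nth 0 (conj_part s) q = count (ltn q) s.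
Proof. exact: nth_conjugate. Qed.

Section ConjugatePartition.

Variable s : seq nat.
Hypothesis sorted_s : sorted geq s.

Lemma all_leq_head : all (fun x => x <= head 0 s) s.
Proof.
case: s sorted_s => //= x s' /sorted_geq_head /allP le_s'x.
by rewrite leqnn; apply/allP => y /le_s'x.
Qed.

Lemma conj_part_bounded : all (fun x => 0 < x <= size s) (conj_part s).
Proof.
apply/allP => x x_conj; rewrite (allP (conjugate_bounded _ _) _ x_conj) andbT.
exact: (allP (conjugate_gt0 sorted_s (leqnn _)) _ x_conj).
Qed.

Lemma count_ltn_conj_part i : i < size s -> count (ltn i) (conj_part s) = nth 0 s i.
Proof.
by move=> lt_is; rewrite -(nth_conjugate _ lt_is) conjugateK // all_leq_head.
Qed.

Lemma sumn_conj_part : sumn (conj_part s) = sumn s.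
Proof. exact/sumn_conjugate/all_leq_head. Qed.

End ConjugatePartition.

Lemma conj_part_conjugate m s : sorted geq s -> all (fun x => 0 < x <= m) s ->
  conj_part (conjugate m s) = s.
Proof.
move=> sorted_s /allP s_bounded; case: (posnP m) => [m0 | m_gt0].
  rewrite m0 in s_bounded *.
  by case: s s_bounded {sorted_s} => // x s' /(_ x (mem_head _ _)); lia.
have -> : conj_part (conjugate m s) = conjugate (size s) (conjugate m s).
  rewrite /conj_part head_conjugate //; congr conjugate.
  by apply/eqP; rewrite -all_count; apply/allP => x /s_bounded /andP[].
by rewrite conjugateK //; apply/allP => x /s_bounded /andP[].
Qed.

Definition nonempty_rows (T : eqType) (L : seq (seq T)) : seq (seq T) :=
  [seq r <- L | 0 < size r].

Lemma nth_nonempty_rows (T : eqType) (L : seq (seq T)) i :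
  sorted geq (map size L) -> nth [::] (nonempty_rows L) i = nth [::] L i.
Proof.
elim: L i => [|x L IHL] i //= sorted_xL; rewrite /nonempty_rows /=.
have /allP le_Lx := sorted_geq_head sorted_xL.
case: (posnP (size x)) => [/size0nil x0 | x_gt0].
  have L0 r : r \in L -> r = [::].
    by move=> r_L; apply: size0nil; have := le_Lx _ (map_f size r_L); rewrite x0 /=; lia.
  rewrite x0 /= (@eq_in_filter _ _ pred0) ?filter_pred0 ?nth_nil; last by move=> r /L0 ->.
  case: i => [|i] //=; case: (ltnP i (size L)) => [lt_iL | le_Li]; last by rewrite nth_default.
  by rewrite (L0 (nth [::] L i)) ?mem_nth.
by case: i => [|i] //=; exact/IHL/(path_sorted sorted_xL).
Qed.

Lemma flatten_nonempty_rows (T : eqType) (L : seq (seq T)) :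
  flatten (nonempty_rows L) = flatten L.
Proof. by elim: L => //= -[|x r] L /= ->. Qed.

Lemma nonempty_rows_pad (T : eqType) (P : seq (seq T)) n :
  all (fun r => 0 < size r) P -> size P <= n -> nonempty_rows (mkseq (nth [::] P) n) = P.
Proof.
move=> P_ne le_Pn; rewrite -(subnKC le_Pn) /mkseq iotaD map_cat /nonempty_rows filter_cat.
rewrite -/(mkseq _ _) mkseq_nth (all_filterP P_ne).
rewrite (@eq_in_filter _ _ pred0) ?filter_pred0 ?cats0 //.
by move=> y /mapP[r]; rewrite mem_iota => /andP[le_Pr _] ->; rewrite nth_default.
Qed.

Lemma count_top_entry (L : seq (seq nat)) m :
  (forall r, all (fun x => 0 < x <= m - r) (nth [::] L r)) ->
  count (fun x => x == m) (flatten L) = count (ltn m.-1) (nth [::] L 0).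
Proof.
case: L => [|s L] //= L_bounded; rewrite count_cat.
rewrite [count _ (flatten L)](@eq_in_count _ _ pred0) ?count_pred0 ?addn0; last first.
  move=> x /flattenP[t /(nthP [::])[r lt_rL <-] x_t].
  by have := allP (L_bounded r.+1) x x_t; rewrite /=; lia.
by apply: eq_in_count => x x_s; have := allP (L_bounded 0) x x_s; rewrite /=; lia.
Qed.

(** * Gelfand-Tsetlin patterns read by columns *)

Section GelfandTsetlin.

Variables n c : nat.

Definition gt_of (e : nat -> nat -> nat) : seq (seq nat) :=
  mkseq (fun i => mkseq (fun d => e i.+1 (i.+1 + d)) (n - i)) n.

Definition gt_rules (e : nat -> nat -> nat) : Prop :=
  [/\ forall i j, 1 <= i <= j -> j <= n -> e i j <= c,
      forall i j, 1 <= i < j -> j <= n -> e i.+1 j <= e i j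
    & forall i j, 1 <= i <= j -> j < n -> e i j <= e i.+1 j.+1].

Lemma gt_entry_gt_of e i j : 1 <= i <= j -> j <= n -> gt_entry n c (gt_of e) i j = e i j.
Proof.
move=> /andP[i_gt0 le_ij] le_jn; rewrite /gt_entry.
have -> : (j == i.-1) = false by apply/negbTE; lia.
have -> : (j == n.+1) = false by apply/negbTE; lia.
by rewrite !nth_mkseq ?prednK ?subnKC //; lia.
Qed.

Lemma eq_gt_of e e' : (forall i j, 1 <= i <= j -> j <= n -> e i j = e' i j) ->
  gt_of e = gt_of e'.
Proof.
by move=> ee'; apply: eq_in_mkseq => i lt_in; apply: eq_in_mkseq => d lt_d; apply: ee'; lia.
Qed.

Lemma gt_entry_left A i : gt_entry n c A i i.-1 = 0.
Proof. by rewrite /gt_entry eqxx. Qed.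

Lemma gt_entry_right A i : i <= n -> gt_entry n c A i n.+1 = c.
Proof. by move=> le_in; rewrite /gt_entry ifF ?eqxx //; apply/negbTE; lia. Qed.

Lemma is_GT_gt_of e : gt_rules e -> is_GT n c (gt_of e).
Proof.
case=> e_le_c e_col e_diag; apply/and4P; split.
- by rewrite size_mkseq.
- apply/allP => i; rewrite mem_iota => lt_i.
  by rewrite /gt_of nth_mkseq ?size_mkseq; [apply/eqP|]; lia.
- apply/allP => i; rewrite mem_iota => lt_i; apply/allP => j; rewrite mem_iota => lt_j.
  by rewrite gt_entry_gt_of; [apply: e_le_c | |]; lia.
apply/allP => i; rewrite mem_iota => lt_i; apply/allP => j; rewrite mem_iota => lt_j.
have i_gt0 : 0 < i by lia.
have col j' : i <= j' -> j' <= n -> e i j' <= e i.-1 j'.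
  by move=> ? ?; rewrite -[in e i _](prednK i_gt0); apply: e_col; lia.
have diag j' : i.-1 <= j' -> j' < n -> e i.-1 j' <= e i j'.+1.
  by move=> ? ?; rewrite -[in e i _](prednK i_gt0); apply: e_diag; lia.
have [lt_ji | le_ij] := ltnP j i.
  have -> : j = i.-1 by lia.
  by rewrite gt_entry_left !gt_entry_gt_of /= ?diag //; lia.
have entry i' : 1 <= i' <= j -> gt_entry n c (gt_of e) i' j = e i' j.
  by move=> ?; apply: gt_entry_gt_of; lia.
rewrite !entry ?col //=; try lia.
have [lt_jn | ->] : j < n \/ j = n by lia.
  by rewrite gt_entry_gt_of ?diag //; lia.
by rewrite gt_entry_right ?e_le_c //; lia.
Qed.

Lemma is_GT_rules A : is_GT n c A -> gt_rules (gt_entry n c A).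
Proof.
case/and4P => _ _ /allP le_c /allP rules.
have rule i j : 1 <= i < n -> i <= j <= n ->
    gt_entry n c A i.+1 j <= gt_entry n c A i j /\
    gt_entry n c A i j <= gt_entry n c A i.+1 j.+1.
  by move=> ? ?; apply/andP/(allP (rules i.+1 _)); rewrite mem_iota; lia.
split.
- by move=> i j ? ?; apply: (allP (le_c i _)); rewrite mem_iota; lia.
- by move=> i j ? ?; apply: (proj1 (rule i j _ _)); lia.
- by move=> i j ? ?; apply: (proj2 (rule i j _ _)); lia.
Qed.

Lemma gt_of_entry A : is_GT n c A -> gt_of (gt_entry n c A) = A.
Proof.
case/and4P => /eqP size_A /allP size_rows _ _.
apply: (@eq_from_nth _ [::]); rewrite size_mkseq ?size_A // => i lt_in.
have /eqP size_i : size (nth [::] A i) == n - i.+1 + 1.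
  by apply: (size_rows i.+1); rewrite mem_iota; lia.
rewrite nth_mkseq //; apply: (@eq_from_nth _ 0) => [|d]; rewrite size_mkseq ?size_i; first lia.
move=> lt_d; rewrite nth_mkseq //.
rewrite /gt_entry ifF; last by apply/negbTE; lia.
by rewrite ifF ?addKn //; apply/negbTE; lia.
Qed.

Definition gt_col (A : seq (seq nat)) (j : nat) : seq nat :=
  mkseq (fun v => gt_entry n c A v.+1 j) j.

Definition gt_rows (A : seq (seq nat)) : seq (seq nat) :=
  mkseq (fun r => conj_part (gt_col A (n - r))) n.

Definition gt_to_spp (A : seq (seq nat)) : seq (seq nat) := nonempty_rows (gt_rows A).

Definition spp_to_gt (P : seq (seq nat)) : seq (seq nat) :=
  gt_of (fun i j => count (ltn i.-1) (nth [::] P (n - j))).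

Lemma size_gt_col A j : size (gt_col A j) = j.
Proof. exact: size_mkseq. Qed.

Lemma nth_gt_col A j v : v < j -> nth 0 (gt_col A j) v = gt_entry n c A v.+1 j.
Proof. exact: nth_mkseq. Qed.

Lemma head_gt_col A j : 0 < j -> head 0 (gt_col A j) = gt_entry n c A 1 j.
Proof. by move=> j_gt0; rewrite -nth0 nth_gt_col. Qed.

Lemma gt_col_spp_to_gt P j : j <= n ->
  gt_col (spp_to_gt P) j = conjugate j (nth [::] P (n - j)).
Proof. by move=> le_jn; apply: eq_in_mkseq => v lt_vj; rewrite gt_entry_gt_of //; lia. Qed.

Section GTPattern.

Variable A : seq (seq nat).
Hypothesis A_GT : is_GT n c A.

Lemma sorted_gt_col j : j <= n -> sorted geq (gt_col A j).
Proof.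
have [_ col _] := is_GT_rules A_GT.
by move=> le_jn; apply: sorted_geq_mkseq => v lt_vj; apply: col; lia.
Qed.

Lemma gt_col_interlace j q : 0 < j < n -> q < j ->
  nth 0 (gt_col A j) q <= nth 0 (gt_col A j.+1) q.+1.
Proof.
have [_ _ diag] := is_GT_rules A_GT.
by move=> lt_jn lt_qj; rewrite !nth_gt_col //; apply: diag; lia.
Qed.

Lemma gt_entry_row1_le j : 0 < j < n -> gt_entry n c A 1 j <= gt_entry n c A 1 j.+1.
Proof.
have [_ col diag] := is_GT_rules A_GT.
by move=> lt_jn; apply: leq_trans (diag 1 j _ _) (col 1 j.+1 _ _); lia.
Qed.

Lemma sorted_gt_rows_sizes : sorted geq (map size (gt_rows A)).
Proof.
rewrite -map_comp; apply: sorted_geq_mkseq => r lt_rn /=.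
rewrite !size_conj_part !head_gt_col; try lia.
have -> : n - r = (n - r.+1).+1 by lia.
by apply: gt_entry_row1_le; lia.
Qed.

Lemma nth_gt_to_spp r : r < n -> nth [::] (gt_to_spp A) r = conj_part (gt_col A (n - r)).
Proof. by move=> lt_rn; rewrite nth_nonempty_rows ?sorted_gt_rows_sizes // nth_mkseq. Qed.

Lemma size_gt_to_spp : size (gt_to_spp A) <= n.
Proof. by rewrite size_filter (leq_trans (count_size _ _)) ?size_mkseq. Qed.

Lemma gt_to_spp_row_bounded r : all (fun x => 0 < x <= n - r) (nth [::] (gt_to_spp A) r).
Proof.
have [lt_rn | le_nr] := ltnP r n; last by rewrite nth_default // (leq_trans size_gt_to_spp).
rewrite nth_gt_to_spp //.
by have := conj_part_bounded (sorted_gt_col (leq_subr r n)); rewrite size_gt_col.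
Qed.

Lemma sorted_gt_to_spp_sizes : sorted geq (map size (gt_to_spp A)).
Proof.
have -> : map size (gt_to_spp A) = filter (ltn 0) (map size (gt_rows A)) by rewrite filter_map.
by apply: sorted_filter sorted_gt_rows_sizes => a b d /=; lia.
Qed.

Lemma gt_to_spp_col_lt r q : r.+1 < size (gt_to_spp A) ->
  q < size (nth [::] (gt_to_spp A) r.+1) ->
  nth 0 (nth [::] (gt_to_spp A) r.+1) q < nth 0 (nth [::] (gt_to_spp A) r) q.
Proof.
move=> lt_r; have lt_rn : r.+1 < n by apply: leq_trans lt_r size_gt_to_spp.
rewrite !nth_gt_to_spp; [|lia..]; have -> : n - r = (n - r.+1).+1 by lia.
set j := n - r.+1; have lt_jn : 0 < j < n by rewrite /j; lia.
have sorted_j := sorted_gt_col (ltnW (proj2 (andP lt_jn))).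
have sorted_j1 := sorted_gt_col (proj2 (andP lt_jn)).
rewrite size_conj_part => lt_q_head.
have lt_q_head1 : q < head 0 (gt_col A j.+1).
  by move: lt_q_head; rewrite !head_gt_col //; have := gt_entry_row1_le lt_jn; lia.
rewrite !nth_conj_part //.
have := @count_ltn_shift 1 0 _ _ q sorted_j1 sorted_j; rewrite !addn0 addn1; apply.
  by move=> q'; rewrite size_gt_col addn0 addn1; apply: gt_col_interlace.
by rewrite (count_ltn_sorted _ 0) // nth0.
Qed.

Lemma count_top_gt_to_spp : 0 < n ->
  count (fun x => x == n) (flatten (gt_to_spp A)) = gt_entry n c A n n.
Proof.
move=> n_gt0; rewrite count_top_entry; last exact: gt_to_spp_row_bounded.
rewrite nth_gt_to_spp // subn0 count_ltn_conj_part ?sorted_gt_col ?size_gt_col //; last lia.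
by rewrite nth_gt_col ?prednK //; lia.
Qed.

Lemma gt_to_spp_shape i : 1 <= i ->
  spp_shape (gt_to_spp A) i = (if i <= n then gt_entry n c A 1 (n.+1 - i) else 0).
Proof.
rewrite /spp_shape /spp_row => i_gt0; case: ifP => [le_in | /negbT]; last first.
  by rewrite -ltnNge => lt_ni; rewrite nth_default // (leq_trans size_gt_to_spp); lia.
rewrite nth_gt_to_spp; last lia.
rewrite size_conj_part head_gt_col; last lia.
by congr gt_entry; lia.
Qed.

Lemma gt_to_spp_norm : spp_norm (gt_to_spp A) = gt_norm A.
Proof.
have -> : gt_norm A = \sum_(0 <= i < n) \sum_(0 <= d < n - i) gt_entry n c A i.+1 (i + d).+1.
  rewrite /gt_norm -[X in map _ X](gt_of_entry A_GT) /gt_of /mkseq -map_comp sumn_mkseq.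
  by apply: eq_bigr => i _; rewrite /= sumn_mkseq.
have /= -> := sum_triangle n (fun i j => gt_entry n c A i.+1 j.+1).
rewrite /spp_norm -sumn_flatten flatten_nonempty_rows sumn_flatten.
rewrite /gt_rows /mkseq -map_comp sumn_mkseq; apply: eq_big_nat => r /andP[_ lt_rn] /=.
rewrite sumn_conj_part ?sorted_gt_col ?leq_subr // sumn_mkseq.
by apply: eq_bigr => v _; congr gt_entry; lia.
Qed.

Lemma spp_to_gtK : spp_to_gt (gt_to_spp A) = A.
Proof.
rewrite -[RHS](gt_of_entry A_GT); apply: eq_gt_of => i j /andP[i_gt0 le_ij] le_jn.
rewrite nth_gt_to_spp ?subKn; try lia.
rewrite count_ltn_conj_part ?sorted_gt_col ?size_gt_col ?nth_gt_col ?prednK //; lia.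
Qed.

End GTPattern.

Lemma gt_to_spp_class k A : 0 < n -> gt_class n c k A -> spp_class n c k (gt_to_spp A).
Proof.
move=> n_gt0 /andP[A_GT /eqP A_k]; have [le_c _ _] := is_GT_rules A_GT.
have in_rows x : x \in gt_to_spp A -> exists2 r, r < n & x = conj_part (gt_col A (n - r)).
  by rewrite mem_filter => /andP[_ /mapP[r]]; rewrite mem_iota; exists r => //; lia.
apply/and4P; split; first apply/and4P; first split.
- exact: filter_all.
- exact: sorted_gt_to_spp_sizes.
- by apply/allP => _ /in_rows[r _ ->]; apply: sorted_conjugate.
- apply/allP => r; rewrite mem_iota => lt_r; apply/allP => q; rewrite mem_iota => lt_q.
  by apply: gt_to_spp_col_lt => //; lia.
- apply/allP => x /flattenP[s /(nthP [::])[r _ <-] x_s].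
  by have := allP (gt_to_spp_row_bounded A_GT r) x x_s; rewrite /=; lia.
- by apply/allP => _ /in_rows[r lt_rn ->]; rewrite size_conj_part head_gt_col ?le_c //; lia.
- by rewrite count_top_gt_to_spp ?A_k.
Qed.

End GelfandTsetlin.

(** * Strict plane partitions *)

Section StrictPlanePartition.

Variables (n c k : nat) (P : seq (seq nat)).
Hypothesis P_class : spp_class n c k P.

Lemma spp_row_sorted r : sorted geq (nth [::] P r).
Proof.
case/and4P: P_class => /and4P[_ _ /allP rows_sorted _] _ _ _.
by have [/(mem_nth [::])/rows_sorted | le_Pr] := ltnP r (size P); last rewrite nth_default.
Qed.

Lemma spp_row_size r : size (nth [::] P r) <= c.
Proof.
case/and4P: P_class => _ _ /allP widths _.
by have [/(mem_nth [::])/widths | le_Pr] := ltnP r (size P); last rewrite nth_default.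
Qed.

Lemma spp_col_lt r q : q < size (nth [::] P r.+1) ->
  nth 0 (nth [::] P r.+1) q < nth 0 (nth [::] P r) q.
Proof.
case/and4P: P_class => /and4P[_ _ _ /allP cols] _ _ _ lt_q.
have lt_rP : r.+1 < size P.
  by rewrite ltnNge; apply: contraTN lt_q => le_Pr; rewrite nth_default.
by apply: (allP (cols r _)); rewrite mem_iota; lia.
Qed.

Lemma spp_row_size_le r : size (nth [::] P r.+1) <= size (nth [::] P r).
Proof.
case/and4P: P_class => /and4P[_ /(sortedP 0) sizes _ _] _ _ _.
have [lt_rP | le_Pr] := ltnP r.+1 (size P); last by rewrite nth_default.
by have := sizes r; rewrite size_map !(nth_map [::]) //; [apply | lia].
Qed.

Lemma spp_row_bounded r : all (fun x => 0 < x <= n - r) (nth [::] P r).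
Proof.
case/and4P: P_class => _ /allP parts _ _.
have part r' x : x \in nth [::] P r' -> 0 < x <= n.
  have [lt_rP | le_Pr] := ltnP r' (size P); last by rewrite nth_default.
  by move=> x_r; apply/parts/flattenP; exists (nth [::] P r') => //; apply: mem_nth.
elim: r => [|r IHr]; first by apply/allP => x /part; rewrite subn0.
apply/allP => x /(nthP 0)[q lt_q <-].
have lt_q' := leq_trans lt_q (spp_row_size_le r).
move: (spp_col_lt lt_q) (allP IHr _ (mem_nth 0 lt_q')) (part _ _ (mem_nth 0 lt_q)) => /=; lia.
Qed.

Lemma spp_size_le : size P <= n.
Proof.
case/and4P: P_class => /and4P[/allP nonempty _ _ _] _ _ _.
case E: (size P) => [|m] //.
have : 0 < size (nth [::] P m) by apply/nonempty/mem_nth; rewrite E.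
by case: (nth [::] P m) (spp_row_bounded m) => [|x s] //= /andP[]; lia.
Qed.

Lemma spp_to_gt_class : 0 < n -> gt_class n c k (spp_to_gt n P).
Proof.
move=> n_gt0; apply/andP; split.
  apply: is_GT_gt_of; split => i j.
  - by move=> _ _; apply: leq_trans (count_size _ _) (spp_row_size _).
  - by move=> _ _; apply: sub_count => x /=; lia.
  move=> /andP[i_gt0 le_ij] lt_jn; have -> : n - j = (n - j.+1).+1 by lia.
  set s := nth [::] P (n - j.+1); set t := nth [::] P (n - j.+1).+1.
  have [-> // | ct_gt0] := posnP (count (ltn i.-1) t).
  have := @count_ltn_shift 0 1 s t i.-1 (spp_row_sorted _) (spp_row_sorted _) _ ct_gt0.
  rewrite addn0 addn1 prednK //; apply=> q; rewrite addn0 addn1; exact: spp_col_lt.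
case/and4P: P_class => _ _ _ /eqP <-.
by rewrite gt_entry_gt_of ?subnn -?count_top_entry //; [exact: spp_row_bounded | lia..].
Qed.

Lemma gt_to_sppK : gt_to_spp n c (spp_to_gt n P) = P.
Proof.
case/and4P: P_class => /and4P[nonempty _ _ _] _ _ _.
rewrite /gt_to_spp -[RHS](nonempty_rows_pad nonempty spp_size_le); congr nonempty_rows.
apply: eq_in_mkseq => r lt_rn; rewrite gt_col_spp_to_gt ?leq_subr // subKn; last exact: ltnW.
by rewrite conj_part_conjugate ?spp_row_sorted ?spp_row_bounded.
Qed.

End StrictPlanePartition.

Unset Implicit Arguments.

Theorem lemma2 (n c k : nat) (hn : 1 <= n) (hk : k <= c) :
  exists f : {A : seq (seq nat) | gt_class n c k A} ->
             {P : seq (seq nat) | spp_class n c k P},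
    bijective f /\
    (forall A, spp_norm (val (f A)) = gt_norm (val A)) /\
    (forall A (i : nat), 1 <= i ->
       spp_shape (val (f A)) i =
       (if i <= n then gt_entry n c (val A) 1 (n.+1 - i) else 0)).
Proof.
pose f (A : {A | gt_class n c k A}) : {P | spp_class n c k P} :=
  exist _ (gt_to_spp n c (val A)) (gt_to_spp_class hn (valP A)).
pose g (P : {P | spp_class n c k P}) : {A | gt_class n c k A} :=
  exist _ (spp_to_gt n (val P)) (spp_to_gt_class (valP P) hn).
exists f; split; last split.
- exists g => [[A A_class] | [P P_class]]; apply: val_inj => /=.
    by case/andP: A_class => A_GT _; apply: spp_to_gtK.
  exact: (gt_to_sppK P_class).
- by move=> [A A_class]; case/andP: (A_class) => A_GT _; apply: gt_to_spp_norm.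
- by move=> [A A_class] i; case/andP: (A_class) => A_GT _; apply: gt_to_spp_shape.
Qed.
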